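(* For any $\delta>0$ and any integer $s\in\{0,1,\dots,n\}$ with $s>8\log\frac{4}{\delta}$, the algorithm $C_s$ is $(\varepsilon,\frac{1}{2}\delta)$-differentially private for \[ \varepsilon=\sqrt{\frac{32\log\frac{4}{\delta}}{s}}\cdot\left(1-\frac{s}{n}\right). \]
   Context: For $s\in\{0,\dots,n\}$, the algorithm $C_s$ on input $(x_1,\dots,x_n)\in\{0,1\}^n$ chooses $H$ uniformly at random among subsets of $[n]$ of size $s$, draws $B\sim\mathrm{Bin}(s,1/2)$ independently, and outputs $\sum_{i\notin H}x_i+B$. An algorithm $M$ on $\{0,1\}^n$ is $(\varepsilon,\delta)$-differentially private if for all $X,X'$ differing in one coordinate and every set $W$ of outputs, $\Pr[M(X)\in W]\le e^{\varepsilon}\Pr[M(X')\in W]+\delta$. $\log$ is the natural logarithm. *)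

From HB Require Import structures.
From mathcomp Require Import all_boot all_order all_algebra.
From mathcomp Require Import reals.
From mathcomp Require Import sequences.
From mathcomp.analysis Require Import exp.
Set Implicit Arguments. Unset Strict Implicit. Unset Printing Implicit Defensive.
Import Order.TTheory GRing.Theory Num.Theory.
Local Open Scope ring_scope.

(* Pr[C_s(X) = k] : H uniform among subsets of [n] of size s, B ~ Bin(s,1/2),
   output = sum_{i notin H} x_i + B. *)
Definition C_prob (R : realType) (n s : nat) (X : {ffun 'I_n -> bool}) (k : nat) : R :=
  ('C(n, s)%:R)^-1 *
  \sum_(H : {set 'I_n} | #|H| == s)
     (let c := #|[set i | (i \notin H) && X i]| in
      if (c <= k)%N then 'C(s, k - c)%:R / 2 ^+ s else 0).

(* Pr[C_s(X) \in W] for an arbitrary set W of outputs (outputs lie in {0,...,n}). *)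
Definition C_probW (R : realType) (n s : nat) (X : {ffun 'I_n -> bool}) (W : pred nat) : R :=
  \sum_(k < n.+1 | W k) C_prob R s X k.

Definition neighbors (n : nat) (X X' : {ffun 'I_n -> bool}) : Prop :=
  #|[set i | X i != X' i]| = 1%N.

Definition C_dp (R : realType) (n s : nat) (eps delta : R) : Prop :=
  forall X X' : {ffun 'I_n -> bool}, neighbors X X' ->
  forall W : pred nat, C_probW R s X W <= expR eps * C_probW R s X' W + delta.

(* Let X and X' differ exactly at coordinate j, let B ~ Bin(s, 1/2) and let
   c_Y(H) be the number of ones of Y outside H, so that Pr[C_s(Y) = k] is the
   average over H of Pr[c_Y(H) + B = k].  When j is in H the two counts agree;
   otherwise they differ by one.  Swapping j with an element of H yields a set
   containing j on which X' has the count that X or X' has on H, and every set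
   containing j arises from exactly n - s such swaps.  Averaging over the swaps
   gives Pr[C_s(X) = k] <= (1 + e (1 - s/n)) Pr[C_s(X') = k] plus excess terms,
   which appear only where Pr[B = v] > (1 + e) Pr[B = v +- 1].  Summed over k
   they weigh at most Pr[B in V] with V = {v | Pr[B = v] > (1 + e) Pr[B = v + 1]},
   and every v in V exceeds ((1 + e) s - 1) / (2 + e).  Chernoff's bound with
   Hoeffding's lemma gives Pr[B in V] <= 2 exp (- e^2 s / 32), which equals
   delta / 2 for e = sqrt (32 log (4 / delta) / s). *)

From HB Require Import structures.
From mathcomp Require Import all_boot all_order all_algebra.
From mathcomp Require Import reals.
From mathcomp Require Import sequences.
From mathcomp.analysis Require Import exp.
From mathcomp Require Import functions topology normedtype derive.
From mathcomp Require Import fingroup perm.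
From mathcomp Require Import zify ring lra.
Set Implicit Arguments. Unset Strict Implicit. Unset Printing Implicit Defensive.
Import Order.TTheory GRing.Theory Num.Theory.
Import numFieldNormedType.Exports.
Local Open Scope ring_scope.

Section ExpInequalities.
Variable R : realType.

Lemma le_at0_of_derive_le0 (f df : R -> R) :
  (forall x : R, is_derive x (1 : R) f (df x)) -> (forall x, 0 < x -> df x <= 0) ->
  forall m, 0 <= m -> f m <= f 0.
Proof.
move=> f' df_le0 m m0.
have cf : continuous f.
  by move=> x; apply/differentiable_continuous/derivable1_diffP; have [] := f' x.
apply: (@ler0_derive1_nincry _ f 0) => //; last exact/continuous_subspaceT.
by move=> x; rewrite in_itv /= andbT derive1E => x0; have [_ ->] := f' x; exact: df_le0.
Qed.

Lemma two_sub_mul_expR_le (m : R) : 0 <= m -> (2 - m) * expR m <= 2 + m.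
Proof.
move=> m0.
have f' (x : R) : is_derive x (1 : R) ((cst 2 - id) * expR - id) ((1 - x) * expR x - 1).
  by apply: is_derive_eq; rewrite /= !fctE /GRing.scale /=; lra.
have : (2 - m) * expR m - m <= (2 - 0) * expR 0 - 0.
  apply: (le_at0_of_derive_le0 f') m0 => x x0; rewrite subr_le0.
  have := ler_wpM2r (expR_ge0 x) (expR_ge1Dx (- x)).
  by rewrite expRN mulVf ?gt_eqF ?expR_gt0.
rewrite expR0; lra.
Qed.

Lemma hoeffding_half (m : R) : 0 <= m ->
  1 + expR m <= 2 * expR (m / 2 + m ^+ 2 / 8).
Proof.
move=> m0.
pose g := cst (- 1 / 2) * id + cst (- 1 / 8) * (id * id) : R -> R.
have f' (x : R) : is_derive x (1 : R) ((cst 1 + expR) * (expR \o g))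
    (expR (g x) * (expR x - (1 + expR x) * ((2 + x) / 4))).
  by apply: is_derive_eq; rewrite /g /= !fctE /GRing.scale /=; field.
have : (1 + expR m) * expR (g m) <= (1 + expR 0) * expR (g 0).
  apply: (le_at0_of_derive_le0 f') m0 => x x0.
  rewrite mulr_ge0_le0 ?expR_ge0 //.
  have := two_sub_mul_expR_le (ltW x0); lra.
have gK : expR (g m) * expR (m / 2 + m ^+ 2 / 8) = 1.
  by rewrite -expRD -[RHS]expR0; congr expR; rewrite /g /= !fctE expr2; field.
have g0 : g 0 = 0 by rewrite /g /= !fctE; ring.
rewrite g0 expR0 => /(ler_wpM2r (expR_ge0 (m / 2 + m ^+ 2 / 8))).
by rewrite -mulrA gK; lra.
Qed.

Lemma expR_quarter_le2 : expR (1 / 4 : R) <= 2.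
Proof.
have := ler_wpM2r (expR_ge0 (1 / 4)) (expR_ge1Dx (- (1 / 4) : R)).
rewrite expRN mulVf ?gt_eqF ?expR_gt0 //; nra.
Qed.

End ExpInequalities.

(* The contribution to delta of an output with probability a under X and b under X'. *)
Definition excess (R : numDomainType) (e a b : R) : R :=
  if a <= (1 + e) * b then 0 else a.

Section Excess.
Variables (R : numDomainType) (e : R).
Hypothesis e_ge0 : 0 <= e.

Lemma excess_ge0 a b : 0 <= a -> 0 <= excess e a b.
Proof. by rewrite /excess; case: ifP. Qed.

Lemma excess0l b : 0 <= b -> excess e 0 b = 0.
Proof. by move=> b0; rewrite /excess mulr_ge0 // addr_ge0. Qed.

Lemma le_excess a b : 0 <= b -> a <= (1 + e) * b + excess e a b.
Proof.
move=> b0; rewrite /excess; case: ifP => [ab|_]; first by rewrite addr0.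
by rewrite lerDr mulr_ge0 // addr_ge0.
Qed.

End Excess.

Lemma sum_shift_le (R : numDomainType) (g : nat -> R) (c m N : nat) :
  (forall v, 0 <= g v) -> (forall v, (m <= v)%N -> g v = 0) ->
  \sum_(k < N | (c <= k)%N) g (k - c)%N <= \sum_(v < m) g v.
Proof.
move=> g_ge0 g_eq0.
have -> : \sum_(k < N | (c <= k)%N) g (k - c)%N = \sum_(v < N - c) g v.
  rewrite big_mkcond /=; elim: N => [|N IHN]; first by rewrite !big_ord0.
  rewrite big_ord_recr /= IHN; case: (leqP c N) => [cN|Nc].
    by rewrite subSn // big_ord_recr.
  move: (Nc) (ltnW Nc); rewrite -!subn_eq0 => /eqP-> /eqP->.
  by rewrite !big_ord0 addr0.
rewrite -!(big_mkord xpredT).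
apply: (@le_trans _ _ (\sum_(0 <= v < maxn (N - c) m) g v)).
  by rewrite (big_cat_nat (leq0n _) (leq_maxl (N - c) m)) /= lerDl sumr_ge0.
rewrite (big_cat_nat (leq0n _) (leq_maxr (N - c) m)) /= [X in _ + X]big1_seq ?addr0 //.
by move=> v /andP[_]; rewrite mem_iota => /andP[mv _]; exact: g_eq0.
Qed.

Definition binom_pmf (R : realType) (s v : nat) : R := 'C(s, v)%:R / 2 ^+ s.

Definition shifted_pmf (R : realType) (s c k : nat) : R :=
  if (c <= k)%N then binom_pmf R s (k - c) else 0.

Definition binom_excess (R : realType) (e : R) (s : nat) : R :=
  \sum_(v < s.+1) excess e (binom_pmf R s v) (binom_pmf R s v.+1).

Section Binomial.
Variables (R : realType) (s : nat).
Local Notation pmf := (binom_pmf R s).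

Lemma binom_pmf_ge0 v : 0 <= pmf v.
Proof. by rewrite divr_ge0 ?exprn_ge0. Qed.

Lemma binom_pmf_small v : (s < v)%N -> pmf v = 0.
Proof. by move=> sv; rewrite /binom_pmf bin_small ?mul0r. Qed.

Lemma binom_pmf_sub v : (v <= s)%N -> pmf (s - v) = pmf v.
Proof. by move=> vs; rewrite /binom_pmf bin_sub. Qed.

Lemma shifted_pmf_ge0 c k : 0 <= shifted_pmf R s c k.
Proof. by rewrite /shifted_pmf; case: ifP => // _; exact: binom_pmf_ge0. Qed.

Lemma shifted_pmfD c d k : (c <= k)%N ->
  shifted_pmf R s (c + d) k = shifted_pmf R s d (k - c).
Proof.
by move=> ck; rewrite /shifted_pmf subnDA (_ : (c + d <= k) = (d <= k - c))%N //; lia.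
Qed.

Lemma binom_mgf (mu : R) :
  \sum_(v < s.+1) pmf v * expR (mu * v%:R) = ((expR mu + 1) / 2) ^+ s.
Proof.
rewrite expr_div_n exprD1n mulr_suml; apply: eq_bigr => v _.
by rewrite /binom_pmf expRM_natr -mulr_natr; ring.
Qed.

Lemma binom_tail_le_expR (mu T : R) : 0 <= mu ->
  \sum_(v < s.+1 | T < v%:R) pmf v
    <= expR (s%:R * (mu / 2 + mu ^+ 2 / 8) - mu * T).
Proof.
move=> mu0.
have markov : \sum_(v < s.+1 | T < v%:R) pmf v
    <= \sum_(v < s.+1) pmf v * expR (mu * (v%:R - T)).
  rewrite big_mkcond; apply: ler_sum => v _; case: ifP => [Tv|_].
    rewrite -{1}[pmf v]mulr1 ler_wpM2l ?binom_pmf_ge0 // leNgt expR_lt1 -leNgt.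
    by rewrite mulr_ge0 // subr_ge0 ltW.
  by rewrite mulr_ge0 ?binom_pmf_ge0 ?expR_ge0.
apply: (le_trans markov).
have -> : \sum_(v < s.+1) pmf v * expR (mu * (v%:R - T))
    = expR (- (mu * T)) * \sum_(v < s.+1) pmf v * expR (mu * v%:R).
  rewrite mulr_sumr; apply: eq_bigr => v _.
  by rewrite mulrCA -expRD mulrBr addrC.
rewrite binom_mgf expRD mulrC ler_wpM2r ?expR_ge0 // expRM_natl.
apply: lerXn2r; rewrite ?nnegrE ?divr_ge0 ?addr_ge0 ?expR_ge0 //.
by rewrite ler_pdivrMr // mulrC addrC hoeffding_half.
Qed.

Lemma binom_pmf_ratio_gt (e : R) v : 0 <= e -> (v <= s)%N ->
  (1 + e) * pmf v.+1 < pmf v -> ((1 + e) * s%:R - 1) / (2 + e) < v%:R.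
Proof.
move=> e0 vs; rewrite /binom_pmf mulrA ltr_pM2r ?invr_gt0 ?exprn_gt0 // => ratio.
have Cv_gt0 : (0 : R) < 'C(s, v)%:R by rewrite ltr0n bin_gt0.
have pascal : v.+1%:R * 'C(s, v.+1)%:R = (s%:R - v%:R) * 'C(s, v)%:R :> R.
  by rewrite -natrB // -!natrM mul_bin_left.
have : (1 + e) * (s%:R - v%:R) * 'C(s, v)%:R < v.+1%:R * 'C(s, v)%:R.
  by rewrite -mulrA -pascal mulrCA ltr_pM2l ?ltr0n.
rewrite ltr_pM2r // -natr1 => ineq.
by rewrite ltr_pdivrMr; lra.
Qed.

Lemma binom_excess_ge0 (e : R) : 0 <= binom_excess e s.
Proof. by apply: sumr_ge0 => v _; rewrite excess_ge0 ?binom_pmf_ge0. Qed.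

(* [shifted_pmf R s 1 v] is Pr[B = v - 1]; this is the symmetry v <-> s - v of B. *)
Lemma binom_excess_rev (e : R) :
  \sum_(v < s.+1) excess e (pmf v) (shifted_pmf R s 1 v) = binom_excess e s.
Proof.
rewrite /binom_excess (reindex_inj rev_ord_inj) /=; apply: eq_bigr => v _.
have vs : (v <= s)%N by rewrite -ltnS.
rewrite subSS binom_pmf_sub // /shifted_pmf subn_gt0; case: ltnP => [vs'|sv].
  by rewrite -subnDA addn1 binom_pmf_sub.
by rewrite [pmf v.+1]binom_pmf_small.
Qed.

Lemma sum_excess_shifted_pmfSl (e : R) (c N : nat) : 0 <= e ->
  \sum_(k < N) excess e (shifted_pmf R s c.+1 k) (shifted_pmf R s c k)
    <= binom_excess e s.
Proof.
move=> e0.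
have -> : \sum_(k < N) excess e (shifted_pmf R s c.+1 k) (shifted_pmf R s c k)
    = \sum_(k < N | (c.+1 <= k)%N) excess e (pmf (k - c.+1)) (pmf (k - c.+1).+1).
  rewrite [RHS]big_mkcond; apply: eq_bigr => k _; rewrite {1}/shifted_pmf.
  case: ifP => ck; last by rewrite excess0l ?shifted_pmf_ge0.
  by rewrite /shifted_pmf (ltnW ck) subnSK.
rewrite /binom_excess.
apply: (sum_shift_le (g := fun v => excess e (pmf v) (pmf v.+1))) => [v|v sv].
  by rewrite excess_ge0 ?binom_pmf_ge0.
by rewrite binom_pmf_small ?excess0l ?binom_pmf_ge0.
Qed.

Lemma sum_excess_shifted_pmfSr (e : R) (c N : nat) : 0 <= e ->
  \sum_(k < N) excess e (shifted_pmf R s c k) (shifted_pmf R s c.+1 k)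
    <= binom_excess e s.
Proof.
move=> e0; rewrite -binom_excess_rev.
have -> : \sum_(k < N) excess e (shifted_pmf R s c k) (shifted_pmf R s c.+1 k)
    = \sum_(k < N | (c <= k)%N) excess e (pmf (k - c)) (shifted_pmf R s 1 (k - c)).
  rewrite [RHS]big_mkcond; apply: eq_bigr => k _; rewrite {1}/shifted_pmf.
  case: ifP => ck; last by rewrite excess0l ?shifted_pmf_ge0.
  by rewrite -addn1 shifted_pmfD.
apply: (sum_shift_le (g := fun v => excess e (pmf v) (shifted_pmf R s 1 v))) => [v|v sv].
  by rewrite excess_ge0 ?binom_pmf_ge0.
by rewrite binom_pmf_small ?excess0l ?shifted_pmf_ge0.
Qed.

Lemma binom_excess_le_tail (e : R) : 0 <= e ->
  binom_excess e s <= \sum_(v < s.+1 | ((1 + e) * s%:R - 1) / (2 + e) < v%:R) pmf v.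
Proof.
move=> e0; rewrite [X in _ <= X]big_mkcond; apply: ler_sum => v _.
rewrite /excess; case: ifP => [_|/negbT]; first by case: ifP => // _; exact: binom_pmf_ge0.
by rewrite -ltNge => /binom_pmf_ratio_gt ->; rewrite // -ltnS.
Qed.

Lemma binom_excess_le_expR (e : R) : 0 <= e <= 2 ->
  binom_excess e s <= 2 * expR (- (e ^+ 2 * s%:R / 32)).
Proof.
case/andP=> e0 e2.
(* [T] is the threshold of [binom_pmf_ratio_gt]; this [mu] makes the Chernoff
   exponent at most [1 / 4 - e ^+ 2 * s / 32]. *)
pose mu := 2 * e / (2 + e); pose T := ((1 + e) * s%:R - 1) / (2 + e).
have mu0 : 0 <= mu by rewrite divr_ge0 ?mulr_ge0 //; lra.
apply: (le_trans (binom_excess_le_tail e0)).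
apply: (le_trans (binom_tail_le_expR T mu0)).
have exponent : s%:R * (mu / 2 + mu ^+ 2 / 8) - mu * T <= 1 / 4 - e ^+ 2 * s%:R / 32.
  rewrite -subr_le0 (_ : _ - _ = (s%:R * e ^+ 2 * ((2 + e) ^+ 2 - 16) / 32
                                  - (1 - e / 2) ^+ 2) / (2 + e) ^+ 2); last first.
    by rewrite /mu /T; field; rewrite gt_eqF //; lra.
  rewrite mulr_le0_ge0 ?invr_ge0 ?exprn_ge0 //; last lra.
  have : s%:R * e ^+ 2 * ((2 + e) ^+ 2 - 16) <= 0.
    by rewrite mulr_ge0_le0 ?mulr_ge0 ?sqr_ge0 // subr_le0 expr2; nra.
  have := sqr_ge0 (1 - e / 2); lra.
apply: (le_trans (_ : _ <= expR (1 / 4 - e ^+ 2 * s%:R / 32))); first by rewrite ler_expR.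
by rewrite expRD ler_wpM2r ?expR_ge0 ?expR_quarter_le2.
Qed.

End Binomial.

Definition count_off n (Y : {ffun 'I_n -> bool}) (H : {set 'I_n}) : nat :=
  #|[set i | (i \notin H) && Y i]|.

Section CountOff.
Variable n : nat.
Implicit Types (Y : {ffun 'I_n -> bool}) (H : {set 'I_n}) (e j : 'I_n).

Lemma eq_count_off Y Y' H : {in ~: H, Y =1 Y'} -> count_off Y H = count_off Y' H.
Proof.
move=> eqY; apply: eq_card => i; rewrite !inE.
by case: (boolP (i \in H)) => //= iH; rewrite eqY ?inE.
Qed.

Lemma count_offD1 Y H j : j \notin H -> count_off Y H = (Y j + count_off Y (j |: H))%N.
Proof.
move=> jH; rewrite /count_off (cardsD1 j) !inE jH; congr (_ + _).
by apply: eq_card => i; rewrite !inE negb_or andbA.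
Qed.

Lemma count_off_tperm Y H e j :
  count_off Y (tperm e j @^-1: H) = count_off [ffun i => Y (tperm e j i)] H.
Proof.
rewrite /count_off -[LHS](card_preimset _ (@perm_inj _ (tperm e j))).
by apply: eq_card => i; rewrite !inE tpermK ffunE.
Qed.

Lemma double_count_swap (V : nmodType) j (s : nat) (F : {set 'I_n} -> V) :
  \sum_(H : {set 'I_n} | (#|H| == s) && (j \notin H)) \sum_(e in H) F (tperm e j @^-1: H)
  = (\sum_(H : {set 'I_n} | (#|H| == s) && (j \in H)) F H) *+ (n - s).
Proof.
rewrite (exchange_big_dep xpredT) //=.
have swap e :
    \sum_(H : {set 'I_n} | ((#|H| == s) && (j \notin H)) && (e \in H)) F (tperm e j @^-1: H)
    = \sum_(H : {set 'I_n} | ((#|H| == s) && (j \in H)) && (e \notin H)) F H.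
  have swapK : involutive (fun H => tperm e j @^-1: H).
    by move=> H; apply/setP => x; rewrite !inE tpermK.
  rewrite [RHS](reindex_inj (inv_inj swapK)) /=; apply: eq_bigl => H.
  rewrite card_preimset; last exact: perm_inj.
  by rewrite !inE tpermR tpermL; case: (#|H| == s); case: (j \in H); case: (e \in H).
rewrite (eq_bigr _ (fun e _ => swap e)) -(exchange_big_dep xpredT) //= -sumrMnl.
apply: eq_bigr => H /andP[/eqP cH _].
rewrite (eq_bigl (mem (~: H))) => [|e]; last by rewrite !inE.
by rewrite sumr_const; congr (_ *+ _); have := cardsC H; rewrite card_ord cH; lia.
Qed.

End CountOff.

Lemma excess_swap_le (R : realDomainType) (e p q a b w : R) :
  0 <= e -> 0 <= p -> 0 <= q -> p + q = 1 -> 0 <= a -> 0 <= b -> (w = a \/ w = b) ->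
  a - b - excess e a b <= e * (q * b + p * w).
Proof.
move=> e0 p0 q0 pq a0 b0 w_ab.
have w0 : 0 <= w by case: w_ab => ->.
have rhs0 : 0 <= e * (q * b + p * w) by rewrite mulr_ge0 ?addr_ge0 ?mulr_ge0.
rewrite /excess; case: ifP => [ab|_]; last lra.
case: (lerP a b) => [le_ab|lt_ba]; first lra.
have : e * b <= e * (q * b + p * w).
  rewrite ler_wpM2l // -{1}(mul1r b) -pq mulrDl addrC lerD2l ler_wpM2l //.
  by case: w_ab => ->; rewrite // ltW.
lra.
Qed.

Lemma C_probE (R : realType) n s (Y : {ffun 'I_n -> bool}) k :
  C_prob R s Y k
    = ('C(n, s)%:R)^-1 * \sum_(H : {set 'I_n} | #|H| == s) shifted_pmf R s (count_off Y H) k.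
Proof. by []. Qed.

Lemma C_probW_ge0 (R : realType) n s (Y : {ffun 'I_n -> bool}) W : 0 <= C_probW R s Y W.
Proof.
apply: sumr_ge0 => k _; rewrite C_probE mulr_ge0 ?invr_ge0 ?ler0n //.
by apply: sumr_ge0 => H _; exact: shifted_pmf_ge0.
Qed.

Lemma neighborsP n (X X' : {ffun 'I_n -> bool}) : neighbors X X' ->
  exists2 j, X' j = ~~ X j & forall i, i != j -> X i = X' i.
Proof.
move=> /eqP/cards1P[j Ej]; exists j => [|i ij].
  have : j \in [set i | X i != X' i] by rewrite Ej set11.
  by rewrite inE; case: (X j); case: (X' j).
have : i \notin [set i | X i != X' i] by rewrite Ej inE.
by rewrite inE negbK => /eqP.
Qed.

Section Neighbors.
Variables (n : nat) (X X' : {ffun 'I_n -> bool}) (j : 'I_n).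
Hypotheses (X'j : X' j = ~~ X j) (XX' : forall i, i != j -> X i = X' i).
Implicit Types H : {set 'I_n}.

Lemma count_off_in H : j \in H -> count_off X H = count_off X' H.
Proof.
move=> jH; apply: eq_count_off => i; rewrite inE => iH.
by apply: XX'; apply: contraNneq iH => ->.
Qed.

Lemma count_off_out H : j \notin H ->
  count_off X H = (count_off X' H).+1 \/ count_off X' H = (count_off X H).+1.
Proof.
move=> jH; rewrite !(count_offD1 _ jH) (count_off_in (setU11 j H)) X'j.
by case: (X j); [left|right].
Qed.

Lemma count_off_swap H e : e \in H -> j \notin H ->
  count_off X' (tperm e j @^-1: H) = count_off X H \/
  count_off X' (tperm e j @^-1: H) = count_off X' H.
Proof.
move=> eH jH; rewrite count_off_tperm.
have X'_swap i : i \notin H -> X' (tperm e j i) = if i == j then X e else X' i.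
  move=> iH; case: eqP => [->|/eqP ij].
    by rewrite tpermR XX' //; apply: contraNneq jH => <-.
  have ei : e != i by apply: contraNneq iH => <-.
  by rewrite tpermD // eq_sym.
case: (boolP (X e == X' j)) => [/eqP Xe|Xe]; [right|left];
  apply: eq_count_off => i; rewrite inE ffunE => /X'_swap->.
  by case: eqP => [->|].
case: eqP => [->|/eqP ij]; last by rewrite XX'.
by move: Xe; rewrite X'j; case: (X e); case: (X j).
Qed.

Section Averaging.
Variables (R : realFieldType) (F : nat -> R) (e : R) (s : nat).
Hypotheses (sn : (s <= n)%N) (e_ge0 : 0 <= e) (F_ge0 : forall c, 0 <= F c).
Local Notation a H := (F (count_off X H)).
Local Notation b H := (F (count_off X' H)).

Lemma sum_out_excess_le :
  \sum_(H : {set 'I_n} | (#|H| == s) && (j \notin H)) (a H - b H - excess e (a H) (b H))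
    <= e * (1 - s%:R / n%:R) * \sum_(H : {set 'I_n} | #|H| == s) b H.
Proof.
have sum_b_split : \sum_(H : {set 'I_n} | #|H| == s) b H
    = \sum_(H : {set 'I_n} | (#|H| == s) && (j \in H)) b H
      + \sum_(H : {set 'I_n} | (#|H| == s) && (j \notin H)) b H.
  exact: bigID.
have sum_in_ge0 : 0 <= \sum_(H : {set 'I_n} | (#|H| == s) && (j \in H)) b H.
  exact: sumr_ge0.
case: (posnP s) => [s0|s_gt0].
  have -> : s%:R / n%:R = 0 :> R by rewrite s0 mul0r.
  rewrite sum_b_split subr0 mulr1 mulrDr ler_wpDl ?mulr_ge0 //.
  rewrite mulr_sumr; apply: ler_sum => H _.
  have := le_excess e_ge0 (a H) (F_ge0 (count_off X' H)); lra.
have n_gt0 : (0 < n)%N := leq_trans s_gt0 sn.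
have s_pos : (0 : R) < s%:R by rewrite ltr0n.
set p : R := s%:R / n%:R; set q := 1 - p.
have p_ge0 : 0 <= p by rewrite divr_ge0.
have q_ge0 : 0 <= q by rewrite subr_ge0 ler_pdivrMr ?ltr0n // mul1r ler_nat.
have avg H (c : R) : #|H| = s -> s%:R * c = \sum_(i in H) c.
  by move=> cH; rewrite sumr_const cH mulr_natl.
(* Multiply by s = #|H| and spread each term over the s swaps of j with an
   element of H; [double_count_swap] then regroups the swapped sets. *)
rewrite -(ler_pM2l s_pos) mulr_sumr.
apply: (@le_trans _ _ (\sum_(H : {set 'I_n} | (#|H| == s) && (j \notin H))
           \sum_(i in H) e * (q * b H + p * b (tperm i j @^-1: H)))).
  apply: ler_sum => H /andP[/eqP cH jH]; rewrite (avg H) //; apply: ler_sum => i iH.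
  apply: excess_swap_le; rewrite ?F_ge0 ?subrKC //.
  by case: (count_off_swap iH jH) => ->; [left|right].
rewrite (eq_bigr (fun H : {set 'I_n} => e * (q * (s%:R * b H)
                              + p * \sum_(i in H) b (tperm i j @^-1: H)))); last first.
  move=> H /andP[/eqP cH _]; rewrite (avg H) // !mulr_sumr -big_split mulr_sumr.
  by apply: eq_bigr.
rewrite -mulr_sumr big_split /= -!mulr_sumr (double_count_swap j s (fun H => b H)).
rewrite sum_b_split -[_ *+ (n - s)]mulr_natr natrB // le_eqVlt.
apply/orP; left; apply/eqP.
by rewrite /q /p; field; rewrite pnatr_eq0 -lt0n.
Qed.

Lemma sum_count_off_le :
  \sum_(H : {set 'I_n} | #|H| == s) a H
    <= (1 + e * (1 - s%:R / n%:R)) * \sum_(H : {set 'I_n} | #|H| == s) b H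
       + \sum_(H : {set 'I_n} | (#|H| == s) && (j \notin H)) excess e (a H) (b H).
Proof.
have key := sum_out_excess_le; rewrite !sumrB in key.
have in_eq : \sum_(H : {set 'I_n} | (#|H| == s) && (j \in H)) a H
    = \sum_(H : {set 'I_n} | (#|H| == s) && (j \in H)) b H.
  by apply: eq_bigr => H /andP[_ jH]; rewrite count_off_in.
have b_split : \sum_(H : {set 'I_n} | #|H| == s) b H
    = \sum_(H : {set 'I_n} | (#|H| == s) && (j \in H)) b H
      + \sum_(H : {set 'I_n} | (#|H| == s) && (j \notin H)) b H.
  exact: bigID.
rewrite (bigID (fun H : {set 'I_n} => j \in H)) /= in_eq; lra.
Qed.

End Averaging.

Section Privacy.
Variables (R : realType) (e : R) (s : nat).
Hypotheses (sn : (s <= n)%N) (e_ge0 : 0 <= e).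
Local Notation excess_at k H := (excess e (shifted_pmf R s (count_off X H) k)
                                          (shifted_pmf R s (count_off X' H) k)).

Lemma sum_excess_at_le N :
  \sum_(k < N) \sum_(H : {set 'I_n} | (#|H| == s) && (j \notin H)) excess_at k H
    <= 'C(n, s)%:R * binom_excess e s.
Proof.
rewrite exchange_big /=.
apply: (@le_trans _ _ (\sum_(H : {set 'I_n} | #|H| == s) binom_excess e s)).
  rewrite [X in _ <= X](bigID (fun H : {set 'I_n} => j \in H)) /= ler_wpDl //.
    by apply: sumr_ge0 => H _; exact: binom_excess_ge0.
  apply: ler_sum => H /andP[_ jH].
  by case: (count_off_out jH) => ->;
    [exact: sum_excess_shifted_pmfSl | exact: sum_excess_shifted_pmfSr].
rewrite (eq_bigl (fun H => H \in [set H : {set 'I_n} | #|H| == s])) => [|H].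
  by rewrite sumr_const card_draws card_ord mulr_natl.
by rewrite inE.
Qed.

Lemma C_probW_le W :
  C_probW R s X W <= (1 + e * (1 - s%:R / n%:R)) * C_probW R s X' W + binom_excess e s.
Proof.
have C_gt0 : (0 : R) < 'C(n, s)%:R by rewrite ltr0n bin_gt0.
rewrite /C_probW mulr_sumr.
apply: (@le_trans _ _ (\sum_(k < n.+1 | W k)
    ((1 + e * (1 - s%:R / n%:R)) * C_prob R s X' k + ('C(n, s)%:R)^-1 *
       \sum_(H : {set 'I_n} | (#|H| == s) && (j \notin H)) excess_at k H))).
  apply: ler_sum => k _; rewrite !C_probE mulrCA -mulrDr ler_pM2l ?invr_gt0 //.
  exact: (sum_count_off_le sn e_ge0 (fun c => shifted_pmf_ge0 R s c k)).
rewrite big_split /= lerD2l -mulr_sumr ler_pdivrMl //.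
apply: le_trans (sum_excess_at_le n.+1).
rewrite [X in _ <= X](bigID (fun k : 'I_n.+1 => W k)) /= lerDl.
by apply: sumr_ge0 => k _; apply: sumr_ge0 => H _; rewrite excess_ge0 ?shifted_pmf_ge0.
Qed.

End Privacy.

End Neighbors.

Lemma C_dp_of_binom_excess (R : realType) (n s : nat) (e d : R) :
  (s <= n)%N -> 0 <= e -> binom_excess e s <= d ->
  @C_dp R n s (e * (1 - s%:R / n%:R)) d.
Proof.
move=> sn e_ge0 excess_le X X' /neighborsP[j X'j XX'] W.
apply: (le_trans (C_probW_le X'j XX' sn e_ge0 W)).
by rewrite lerD // ler_wpM2r ?C_probW_ge0 ?expR_ge1Dx.
Qed.

Lemma sqrt_32_ratio_bounds (R : realType) (L : R) (s : nat) : 8 * L < s%:R ->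
  Num.sqrt (32 * L / s%:R) <= 2 /\ L <= Num.sqrt (32 * L / s%:R) ^+ 2 * s%:R / 32.
Proof.
move=> Ls; case: (lerP L 0) => [L_le0|L_gt0].
  have -> : Num.sqrt (32 * L / s%:R) = 0.
    by rewrite ler0_sqrtr //; apply: mulr_le0_ge0; [lra | rewrite invr_ge0].
  by rewrite expr2 !mul0r; split; lra.
have s_gt0 : (0 : R) < s%:R by lra.
rewrite sqr_sqrtr ?divr_ge0 //; last lra.
split; last by rewrite divfK ?gt_eqF //; lra.
by rewrite -[2]ger0_norm // -sqrtr_sqr ler_wsqrtr // ler_pdivrMr //; lra.
Qed.

Theorem claim4p5 (R : realType) (n s : nat) (delta : R) :
  0 < delta -> (s <= n)%N -> 8 * ln (4 / delta) < s%:R ->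
  @C_dp R n s
    (Num.sqrt (32 * ln (4 / delta) / s%:R) * (1 - s%:R / n%:R))
    (delta / 2).
Proof.
move=> delta_gt0 sn Ls.
have [e_le2 L_le] := sqrt_32_ratio_bounds Ls.
apply: C_dp_of_binom_excess => //; first exact: sqrtr_ge0.
apply: (le_trans (binom_excess_le_expR s _)); first by rewrite sqrtr_ge0 e_le2.
have -> : delta / 2 = 2 * expR (- ln (4 / delta)).
  by rewrite expRN lnK ?posrE ?divr_gt0 // invf_div; field.
by rewrite ler_wpM2l // ler_expR lerN2.
Qed.
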